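(* Assume the standing assumptions below, let $\gamma\in[0,\gamma_* )$, and let $U(\cdot;\gamma)$ be the finite wavefront with speed $c(\gamma)$ normalized so that its support is $(-\infty,0]$. Let $V(\xi;\gamma):=\frac{m}{m-\alpha}U(\xi;\gamma)^{m-\alpha}$. Then $$\lim_{\xi\to0^-}V'(\xi;\gamma)=-c(\gamma)^\alpha,\qquad \lim_{\xi\to0^-}V''(\xi;\gamma)=\frac{(\gamma c(\gamma)-h'(0))(m-\alpha)}{(p-1)(m-\alpha+1)c(\gamma)^{1-\alpha}},$$ $$\lim_{\xi\to0^-}\big(|V'|^{p-2}V'\big)'(\xi;\gamma)=\frac{(\gamma c(\gamma)-h'(0))(m-\alpha)}{m-\alpha+1}.$$
   Context: Standing assumptions: $m>0$, $p>1$ with $m(p-1)>1$; $\alpha:=1/(p-1)$. $h\in C^1([0,\infty))$ satisfies $h(0)=0$, and for some $a\in[0,1)$: $h\le0$ on $[0,a]$, $h>0$ on $(a,1)$, $h<0$ on $(1,\infty)$, $h'(1)<0$; if $a>0$ also $\int_0^1h(u)u^{m-1}du>0$. For $\gamma\in[0,\gamma_* )$ ($\gamma_*>0$ small), $c(\gamma)>0$ denotes the unique speed for which the one-dimensional equation $u_t=(|(u^m)_r|^{p-2}(u^m)_r)_r+\gamma|(u^m)_r|^{p-2}(u^m)_r+h(u)$ has a finite wavefront, i.e. a travelling wave $U(r-ct)$ with $U$ continuous, nonincreasing, $U(-\infty)=1$, $U=0$ on some $[\xi_0,\infty)$ and $U>0$ on $(-\infty,\xi_0)$; it is unique up to translation,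 and smooth where positive. *)

From Stdlib Require Import Reals Lra.
From Coquelicot Require Import Coquelicot.
Open Scope R_scope.

(* x^y for x >= 0 and y > 0, with the convention 0^y = 0
   (Stdlib's Rpower 0 y = 1, which is not what we want). *)
Definition rpow (x y : R) : R := if Rlt_dec 0 x then Rpower x y else 0.

Definition phip (p s : R) : R :=
  if Rlt_dec 0 s then Rpower s (p - 1)
  else if Rlt_dec s 0 then - Rpower (- s) (p - 1) else 0.

Definition flux (m p : R) (U : R -> R) (x : R) : R :=
  phip p (Derive (fun y => rpow (U y) m) x).

Definition test_fun (phi : R -> R) (a b : R) : Prop :=
  a < b /\ (forall x, (x <= a \/ b <= x) -> phi x = 0) /\
  (forall x, ex_derive phi x /\ continuous (Derive phi) x).

(* U(r - c t) is a weak solution of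
     u_t = (|(u^m)_r|^{p-2}(u^m)_r)_r + gamma |(u^m)_r|^{p-2}(u^m)_r + h(u),
   i.e. in the travelling coordinate xi = r - c t:
     -c U' = Phi' + gamma Phi + h(U),  Phi = |(U^m)'|^{p-2}(U^m)',
   tested against C^1 compactly supported test functions. *)
Definition tw_weak_solution (m p gamma : R) (h : R -> R) (c : R) (U : R -> R) : Prop :=
  forall phi a b, test_fun phi a b ->
    ex_RInt (fun x => U x * Derive phi x) a b /\
    ex_RInt (fun x => flux m p U x * Derive phi x) a b /\
    ex_RInt (fun x => flux m p U x * phi x) a b /\
    ex_RInt (fun x => h (U x) * phi x) a b /\
    c * RInt (fun x => U x * Derive phi x) a b =
      - RInt (fun x => flux m p U x * Derive phi x) a b
      + gamma * RInt (fun x => flux m p U x * phi x) a b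
      + RInt (fun x => h (U x) * phi x) a b.

Definition finite_wavefront_at (m p gamma : R) (h : R -> R) (c : R) (U : R -> R)
    (xi0 : R) : Prop :=
  (forall x, continuous U x) /\
  (forall x y, x <= y -> U y <= U x) /\
  filterlim U (Rbar_locally m_infty) (locally 1) /\
  (forall x, xi0 <= x -> U x = 0) /\
  (forall x, x < xi0 -> 0 < U x) /\
  tw_weak_solution m p gamma h c U.

Definition finite_wavefront (m p gamma : R) (h : R -> R) (c : R) (U : R -> R) : Prop :=
  exists xi0, finite_wavefront_at m p gamma h c U xi0.

Definition C1_nonneg (h dh : R -> R) : Prop :=
  (forall u, 0 <= u ->
     filterlim (fun v => (h v - h u) / (v - u))
       (within (fun v => 0 <= v /\ v <> u) (locally u)) (locally (dh u))) /\
  (forall u, 0 <= u ->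
     filterlim dh (within (fun v => 0 <= v) (locally u)) (locally (dh u))).

Definition reaction_hyp (m : R) (h dh : R -> R) : Prop :=
  C1_nonneg h dh /\ h 0 = 0 /\
  exists a, 0 <= a < 1 /\
    (forall u, 0 <= u <= a -> h u <= 0) /\
    (forall u, a < u < 1 -> 0 < h u) /\
    (forall u, 1 < u -> h u < 0) /\
    dh 1 < 0 /\
    (0 < a -> 0 < RInt (fun u => h u * rpow u (m - 1)) 0 1).

Definition wavefront_hyp (m p : R) (h : R -> R) (gstar : R) : Prop :=
  forall gamma, 0 <= gamma < gstar ->
    (exists c, 0 < c /\ (exists U, finite_wavefront m p gamma h c U) /\
       forall c', (exists U, finite_wavefront m p gamma h c' U) -> c' = c) /\
    (forall c U1 U2, finite_wavefront m p gamma h c U1 ->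
       finite_wavefront m p gamma h c U2 -> exists s, forall x, U2 x = U1 (x + s)) /\
    (forall c U xi0, finite_wavefront_at m p gamma h c U xi0 ->
       forall k x, x < xi0 -> ex_derive_n U k x).

From Stdlib Require Import Reals Lra.
From Coquelicot Require Import Coquelicot.
Open Scope R_scope.

(* Testing the weak equation with [e^(gamma x)], cut off smoothly just below [xi < 0] and beyond
   the support, and letting the lower cut-off sharpen gives the first integral
     [(c U + Phi)(xi) e^(gamma xi) = J(xi) := int_xi^0 (h(U) - c gamma U) e^(gamma x) dx],
   where [Phi = |(U^m)'|^(p-2) (U^m)'] is the flux.  Hence [Phi = - U P] with
   [P := c - J e^(-gamma xi) / U], so that [V' = - P^alpha] and [|V'|^(p-2) V' = - P].  Since
   [|h(U)| = O(U)] and [U] is nonincreasing, [J(xi) = O(|xi| U(xi))] and [P -> c].  Differentiating [P],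
   the only delicate term is [J / (m U^(m-alpha+1))]; Cauchy's mean value theorem on [[xi, 0]] rewrites
   it as [(h(U)/U - c gamma) e^(gamma eta) / ((m-alpha+1) P^alpha)] at an intermediate point [eta], which
   tends to [(h'(0) - c gamma) / ((m-alpha+1) c^alpha)].  This gives the limit of [P'], from which the
   three limits follow. *)

Lemma Rpower_gt_0 x y : 0 < Rpower x y.
Proof. apply exp_pos. Qed.

Lemma Rpower_Rinv x y : 0 < x -> y <> 0 -> Rpower (Rpower x y) (/ y) = x.
Proof. intros Hx Hy. now rewrite Rpower_mult, Rinv_r, Rpower_1. Qed.

Lemma is_derive_Rpower x y : 0 < x -> is_derive (fun u => Rpower u y) x (y * Rpower x (y - 1)).
Proof. intros Hx. now apply is_derive_Reals, derivable_pt_lim_power. Qed.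

Lemma continuous_Rpower x y : 0 < x -> continuous (fun u => Rpower u y) x.
Proof.
  intros Hx. apply (ex_derive_continuous (K := R_AbsRing) (V := R_NormedModule)).
  eexists. now apply is_derive_Rpower.
Qed.

Lemma rpow_Rpower x y : 0 < x -> rpow x y = Rpower x y.
Proof. intros Hx. unfold rpow. destruct (Rlt_dec 0 x); [easy | lra]. Qed.

Lemma rpow_le0 x y : x <= 0 -> rpow x y = 0.
Proof. intros Hx. unfold rpow. destruct (Rlt_dec 0 x); [lra | easy]. Qed.

Lemma continuous_rpow y x : 0 < y -> continuous (fun u => rpow u y) x.
Proof.
  intros Hy. destruct (Rlt_dec 0 x) as [Hx | Hx].
  - apply (continuous_ext_loc _ (fun u => Rpower u y)).
    + apply locally_interval with 0 p_infty; [easy | easy |].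
      intros u Hu _. now rewrite rpow_Rpower.
    + now apply continuous_Rpower.
  - apply filterlim_locally. intros eps.
    rewrite (rpow_le0 x) by lra.
    assert (Hd : 0 < Rpower eps (/ y)) by apply Rpower_gt_0.
    exists (mkposreal _ Hd). intros u Hu. change (Rabs (u - x) < Rpower eps (/ y)) in Hu.
    change (Rabs (rpow u y - 0) < eps). rewrite Rminus_0_r.
    destruct (Rlt_dec 0 u) as [Hu0 | Hu0].
    + rewrite rpow_Rpower, Rabs_pos_eq by (auto; left; apply Rpower_gt_0).
      replace (pos eps) with (Rpower (Rpower eps (/ y)) y)
        by (rewrite Rpower_mult, Rinv_l, Rpower_1; [easy | apply cond_pos | lra]).
      apply Rlt_Rpower_l; [easy | split; [easy |]].
      apply Rabs_def2 in Hu. lra.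
    + rewrite rpow_le0, Rabs_R0 by lra. apply cond_pos.
Qed.

Lemma phip_rpow p s : phip p s = rpow s (p - 1) - rpow (- s) (p - 1).
Proof.
  unfold phip. destruct (Rlt_dec 0 s); [| destruct (Rlt_dec s 0)].
  - rewrite rpow_Rpower, rpow_le0 by lra. ring.
  - rewrite rpow_le0, rpow_Rpower by lra. ring.
  - rewrite !rpow_le0 by lra. ring.
Qed.

Lemma phip_opp_Rpower p s : 0 < s -> phip p (- s) = - Rpower s (p - 1).
Proof. intros Hs. rewrite phip_rpow, Ropp_involutive, rpow_le0, rpow_Rpower by lra. ring. Qed.

Lemma phip_nonneg p s : 0 <= s -> 0 <= phip p s.
Proof.
  intros Hs. rewrite phip_rpow, (rpow_le0 (- s)) by lra. unfold rpow.
  destruct Rlt_dec; [pose proof (Rpower_gt_0 s (p - 1)) |]; lra.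
Qed.

Lemma continuous_phip p s : 1 < p -> continuous (phip p) s.
Proof.
  intros Hp. apply (continuous_ext (fun s => rpow s (p - 1) - rpow (- s) (p - 1))).
  { intros; symmetry; apply phip_rpow. }
  apply (continuous_minus (fun s => rpow s (p - 1)) (fun s => rpow (- s) (p - 1))).
  - apply continuous_rpow. lra.
  - apply (continuous_comp Ropp (fun u => rpow u (p - 1))).
    + apply continuity_pt_filterlim. reg.
    + apply continuous_rpow. lra.
Qed.

Lemma continuous_Rmult (f g : R -> R) x :
  continuous f x -> continuous g x -> continuous (fun y => f y * g y) x.
Proof. exact (continuous_mult f g x). Qed.

Lemma continuous_exp_scal k x : continuous (fun y => exp (k * y)) x.
Proof. apply continuity_pt_filterlim. reg. Qed.

Lemma RInt_Rminus (f g : R -> R) a b : ex_RInt f a b -> ex_RInt g a b ->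
  RInt (fun x => f x - g x) a b = RInt f a b - RInt g a b.
Proof. exact (RInt_minus f g a b). Qed.

Lemma RInt_ext_le (f g : R -> R) a b : a <= b -> (forall x, a < x < b -> f x = g x) ->
  RInt f a b = RInt g a b.
Proof.
  intros Hab Hfg. apply RInt_ext. intros x Hx.
  rewrite Rmin_left, Rmax_right in Hx by easy. now apply Hfg.
Qed.

Lemma RInt_Rplus (f g : R -> R) a b : ex_RInt f a b -> ex_RInt g a b ->
  RInt (fun x => f x + g x) a b = RInt f a b + RInt g a b.
Proof. exact (RInt_plus f g a b). Qed.

Lemma RInt_Rmult_l (f : R -> R) k a b : ex_RInt f a b ->
  RInt (fun x => k * f x) a b = k * RInt f a b.
Proof. exact (RInt_scal f a b k). Qed.

Lemma ex_RInt_continuous_left (g : R -> R) a b :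
  a <= b -> (forall x, x <= b -> continuous g x) -> ex_RInt g a b.
Proof.
  intros Hab Hg. apply (ex_RInt_continuous (V := R_CompleteNormedModule)).
  intros z Hz. apply Hg. rewrite Rmax_right in Hz; lra.
Qed.

Lemma RInt_Chasles3 (g : R -> R) a b c d : a <= b <= c -> c <= d -> ex_RInt g a d ->
  RInt g a d = RInt g a b + RInt g b c + RInt g c d.
Proof.
  intros Habc Hcd Hg.
  assert (Hac : ex_RInt g a c)
    by (apply (ex_RInt_Chasles_1 (V := R_CompleteNormedModule) _ a c d); [lra | easy]).
  rewrite <- (RInt_Chasles (V := R_CompleteNormedModule) g a c d),
    <- (RInt_Chasles (V := R_CompleteNormedModule) g a b c); try easy.
  - apply (ex_RInt_Chasles_1 (V := R_CompleteNormedModule) _ a b c); [lra | easy].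
  - apply (ex_RInt_Chasles_2 (V := R_CompleteNormedModule) _ a b c); [lra | easy].
  - apply (ex_RInt_Chasles_2 (V := R_CompleteNormedModule) _ a c d); [lra | easy].
Qed.

Lemma cauchy_MVT (f g df dg : R -> R) a b : a < b ->
  (forall x, a < x < b -> is_derive f x (df x)) -> (forall x, a < x < b -> is_derive g x (dg x)) ->
  (forall x, a <= x <= b -> continuous f x) -> (forall x, a <= x <= b -> continuous g x) ->
  exists x, a < x < b /\ (g b - g a) * df x = (f b - f a) * dg x.
Proof.
  intros Hab Hf Hg Cf Cg.
  destruct (MVT f g a b
              (fun x Hx => exist _ (df x) (proj1 (is_derive_Reals f x (df x)) (Hf x Hx)))
              (fun x Hx => exist _ (dg x) (proj1 (is_derive_Reals g x (dg x)) (Hg x Hx))) Hab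
              (fun x Hx => proj2 (continuity_pt_filterlim f x) (Cf x Hx))
              (fun x Hx => proj2 (continuity_pt_filterlim g x) (Cg x Hx))) as [x [Hx E]].
  now exists x.
Qed.

Section RealLimits.

Context {T : Type} {F : (T -> Prop) -> Prop} {FF : Filter F}.

Lemma filterlim_Rplus (f g : T -> R) a b :
  filterlim f F (locally a) -> filterlim g F (locally b) ->
  filterlim (fun x => f x + g x) F (locally (a + b)).
Proof. intros Hf Hg. exact (filterlim_comp_2 f g Rplus Hf Hg (filterlim_plus a b)). Qed.

Lemma filterlim_Rmult (f g : T -> R) a b :
  filterlim f F (locally a) -> filterlim g F (locally b) ->
  filterlim (fun x => f x * g x) F (locally (a * b)).
Proof. intros Hf Hg. exact (filterlim_comp_2 f g Rmult Hf Hg (filterlim_mult a b)). Qed.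

Lemma filterlim_continuous_comp (f : T -> R) (g : R -> R) a :
  filterlim f F (locally a) -> continuous g a -> filterlim (fun x => g (f x)) F (locally (g a)).
Proof. intros Hf Hg. exact (filterlim_comp _ _ _ f g F (locally a) (locally (g a)) Hf Hg). Qed.

Lemma filterlim_Ropp (f : T -> R) a :
  filterlim f F (locally a) -> filterlim (fun x => - f x) F (locally (- a)).
Proof.
  intros Hf. apply (filterlim_continuous_comp f Ropp a Hf).
  apply continuity_pt_filterlim. reg.
Qed.

Lemma filterlim_Rminus (f g : T -> R) a b :
  filterlim f F (locally a) -> filterlim g F (locally b) ->
  filterlim (fun x => f x - g x) F (locally (a - b)).
Proof. intros Hf Hg. now apply filterlim_Rplus, filterlim_Ropp. Qed.

Lemma filterlim_Rinv (f : T -> R) a :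
  a <> 0 -> filterlim f F (locally a) -> filterlim (fun x => / f x) F (locally (/ a)).
Proof.
  intros Ha Hf. apply (filterlim_continuous_comp f Rinv a Hf).
  apply continuity_pt_filterlim, continuity_pt_inv; [apply continuity_pt_id | easy].
Qed.

Lemma filterlim_Rpower (f : T -> R) a y :
  0 < a -> filterlim f F (locally a) -> filterlim (fun x => Rpower (f x) y) F (locally (Rpower a y)).
Proof.
  intros Ha Hf. now apply (filterlim_continuous_comp f (fun u => Rpower u y) a Hf), continuous_Rpower.
Qed.

End RealLimits.

Lemma at_left_0_interval (Q : R -> Prop) :
  at_left 0 Q <-> exists d, 0 < d /\ forall x, - d < x < 0 -> Q x.
Proof.
  split.
  - intros [d Hd]. exists d. split; [apply cond_pos |].
    intros x Hx. apply Hd; [change (Rabs (x - 0) < d); rewrite Rminus_0_r, Rabs_left |]; lra.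
  - intros [d [Hd HQ]]. exists (mkposreal d Hd). intros x Hx Hx0.
    change (Rabs (x - 0) < d) in Hx. apply Rabs_def2 in Hx.
    apply HQ. lra.
Qed.

Lemma filterlim_at_left_0_continuous (f : R -> R) :
  continuous f 0 -> filterlim f (at_left 0) (locally (f 0)).
Proof. intros Hf. exact (filterlim_filter_le_1 f (filter_le_within _) Hf). Qed.

Lemma filterlim_at_left_0_intermediate (f g : R -> R) l :
  (exists d, 0 < d /\ forall x, - d < x < 0 -> exists y, x < y < 0 /\ f x = g y) ->
  filterlim g (at_left 0) (locally l) -> filterlim f (at_left 0) (locally l).
Proof.
  intros [d [Hd Hfg]] Hg P HP.
  destruct (proj1 (at_left_0_interval _) (Hg P HP)) as [d' [Hd' HgP]].
  apply at_left_0_interval. exists (Rmin d d'). split; [now apply Rmin_pos |].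
  intros x Hx. pose proof (Rmin_l d d'). pose proof (Rmin_r d d').
  destruct (Hfg x ltac:(lra)) as [y [Hy ->]]. apply HgP. lra.
Qed.

Section ReactionTerm.

Variables h dh : R -> R.
Hypothesis Hh : C1_nonneg h dh.

Lemma C1_nonneg_lipschitz u : 0 <= u -> exists d K, 0 < d /\ 0 <= K /\
  forall v, 0 <= v -> Rabs (v - u) < d -> Rabs (h v - h u) <= K * Rabs (v - u).
Proof.
  intros Hu. destruct (proj1 (filterlim_locally _ _) (proj1 Hh u Hu) (mkposreal 1 Rlt_0_1)) as [d Hd].
  exists d, (Rabs (dh u) + 1). split; [apply cond_pos |]. split; [pose proof (Rabs_pos (dh u)); lra |].
  intros v Hv Hvu. destruct (Req_dec v u) as [-> | Hne]; [rewrite !Rminus_eq_0, Rabs_R0; lra |].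
  specialize (Hd v Hvu (conj Hv Hne)). change (Rabs ((h v - h u) / (v - u) - dh u) < 1) in Hd.
  replace (h v - h u) with ((h v - h u) / (v - u) * (v - u)) by (field; lra).
  rewrite Rabs_mult. apply Rmult_le_compat_r; [apply Rabs_pos |].
  pose proof (Rabs_triang_inv ((h v - h u) / (v - u)) (dh u)). lra.
Qed.

Lemma continuous_h_comp (f : R -> R) x :
  (forall y, 0 <= f y) -> continuous f x -> continuous (fun y => h (f y)) x.
Proof.
  intros Hf0 Hf. apply filterlim_locally. intros eps.
  destruct (C1_nonneg_lipschitz (f x) (Hf0 x)) as [d [K [Hd [HK Hlip]]]].
  assert (Hr : 0 < Rmin d (eps / (K + 1)))
    by (apply Rmin_pos; [easy | apply Rdiv_lt_0_compat; [apply cond_pos | lra]]).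
  generalize (proj1 (filterlim_locally _ _) Hf (mkposreal _ Hr)). apply filter_imp.
  intros y Hy. change (Rabs (f y - f x) < Rmin d (eps / (K + 1))) in Hy.
  change (Rabs (h (f y) - h (f x)) < eps).
  pose proof (Rmin_l d (eps / (K + 1))). pose proof (Rmin_r d (eps / (K + 1))).
  apply Rle_lt_trans with (K * Rabs (f y - f x)); [apply Hlip; [easy | lra] |].
  apply Rle_lt_trans with (K * (eps / (K + 1))); [apply Rmult_le_compat_l; lra |].
  apply Rmult_lt_reg_r with (K + 1); [lra |].
  replace (K * (eps / (K + 1)) * (K + 1)) with (K * eps) by (field; lra).
  pose proof (cond_pos eps). nra.
Qed.

Lemma filterlim_h_quotient_at_left_0 (f : R -> R) : h 0 = 0 ->
  filterlim f (at_left 0) (locally 0) -> (forall x, x < 0 -> 0 < f x) ->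
  filterlim (fun x => h (f x) / f x) (at_left 0) (locally (dh 0)).
Proof.
  intros H0 Hf Hpos.
  apply (filterlim_comp _ _ _ f (fun v => h v / v) _ (within (fun v => 0 <= v /\ v <> 0) (locally 0))).
  - intros P [d Hd]. pose proof (Hf _ (locally_ball 0 d)) as Hd'. simpl in Hd'.
    change (at_left 0 (fun x => P (f x))).
    apply (filter_imp (fun x => x < 0 /\ ball 0 d (f x))).
    + intros x [Hx Hfx]. specialize (Hpos x Hx). apply Hd; [easy | split; lra].
    + apply filter_and; [exists (mkposreal 1 Rlt_0_1); now intros | exact Hd'].
  - eapply filterlim_ext; [| exact (proj1 Hh 0 (Rle_refl 0))].
    intros v. simpl. now rewrite H0, !Rminus_0_r.
Qed.

End ReactionTerm.

(* [bump t = max 0 (6 t (1 - t))], a continuous probability density on [0, 1]. *)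
Definition bump (t : R) : R := 3 * t * (1 - t) + Rabs (3 * t * (1 - t)).

Definition ramp (t : R) : R := RInt bump 0 t.

Lemma continuous_bump t : continuous bump t.
Proof.
  apply continuity_pt_filterlim. unfold bump.
  apply continuity_pt_plus; [reg |].
  apply (continuity_pt_comp (fun t => 3 * t * (1 - t)) Rabs); [reg | apply Rcontinuity_abs].
Qed.

Lemma bump_nonneg t : 0 <= bump t.
Proof. unfold bump. pose proof (Rle_abs (- (3 * t * (1 - t)))). rewrite Rabs_Ropp in H. lra. Qed.

Lemma bump_out t : t <= 0 \/ 1 <= t -> bump t = 0.
Proof. intros Ht. unfold bump. rewrite Rabs_left1; [ring | destruct Ht; nra]. Qed.

Lemma ex_RInt_bump a b : ex_RInt bump a b.
Proof. apply (ex_RInt_continuous (V := R_CompleteNormedModule)). intros; apply continuous_bump. Qed.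

Lemma is_derive_ramp t : is_derive ramp t (bump t).
Proof.
  apply (is_derive_RInt bump ramp 0 t); [| apply continuous_bump].
  apply filter_forall. intros u. apply (RInt_correct (V := R_CompleteNormedModule)), ex_RInt_bump.
Qed.

Lemma continuous_ramp t : continuous ramp t.
Proof.
  apply (ex_derive_continuous (K := R_AbsRing) (V := R_NormedModule)).
  eexists. apply is_derive_ramp.
Qed.

Lemma RInt_bump_out a b : Rmax a b <= 0 \/ 1 <= Rmin a b -> RInt bump a b = 0.
Proof.
  intros Hab. rewrite (RInt_ext _ (fun _ => 0)), RInt_const; [apply Rmult_0_r |].
  intros x Hx. apply bump_out. lra.
Qed.

Lemma ramp_le0 t : t <= 0 -> ramp t = 0.
Proof.
  intros Ht. apply RInt_bump_out. left. now apply Rmax_lub.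
Qed.

Lemma ramp_1 : ramp 1 = 1.
Proof.
  assert (HI : is_RInt (fun t => 6 * t * (1 - t)) 0 1
                 (minus (3 * 1 ^ 2 - 2 * 1 ^ 3) (3 * 0 ^ 2 - 2 * 0 ^ 3))).
  { apply (is_RInt_derive (fun t => 3 * t ^ 2 - 2 * t ^ 3)).
    - intros t _. auto_derive; [easy | ring].
    - intros t _. apply continuity_pt_filterlim. reg. }
  unfold ramp. rewrite (RInt_ext _ (fun t => 6 * t * (1 - t))), (is_RInt_unique _ _ _ _ HI).
  - unfold minus, plus, opp. simpl. lra.
  - intros t Ht. rewrite Rmin_left, Rmax_right in Ht by lra.
    unfold bump. rewrite Rabs_pos_eq by nra. lra.
Qed.

Lemma ramp_ge1 t : 1 <= t -> ramp t = 1.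
Proof.
  intros Ht. unfold ramp. rewrite <- (RInt_Chasles bump 0 1 t) by apply ex_RInt_bump.
  fold (ramp 1). rewrite ramp_1, RInt_bump_out; [apply Rplus_0_r |].
  right. now apply Rmin_glb.
Qed.

Lemma ramp_bounds t : 0 <= ramp t <= 1.
Proof.
  destruct (Rle_dec t 0); [rewrite ramp_le0; lra |].
  destruct (Rle_dec 1 t); [rewrite ramp_ge1; lra |].
  rewrite <- ramp_1. unfold ramp. rewrite <- (RInt_Chasles bump 0 t 1) by apply ex_RInt_bump.
  assert (0 <= RInt bump 0 t) by (apply RInt_ge_0; [lra | apply ex_RInt_bump | intros; apply bump_nonneg]).
  assert (0 <= RInt bump t 1) by (apply RInt_ge_0; [lra | apply ex_RInt_bump | intros; apply bump_nonneg]).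
  change (plus ?a ?b) with (a + b). lra.
Qed.

(* [drise xi e], the derivative of [rise xi e], is an approximate identity at [xi] as [e -> 0+]. *)
Definition rise (xi e x : R) : R := ramp ((x - xi) / e + 1).

Definition drise (xi e x : R) : R := bump ((x - xi) / e + 1) / e.

Section Rise.

Variables xi e : R.
Hypothesis He : 0 < e.

Lemma continuous_rise x : continuous (rise xi e) x.
Proof.
  apply (continuous_comp (fun x => (x - xi) / e + 1) ramp); [| apply continuous_ramp].
  apply continuity_pt_filterlim. unfold Rdiv. reg.
Qed.

Lemma continuous_drise x : continuous (drise xi e) x.
Proof.
  apply (continuous_Rmult (fun x => bump ((x - xi) / e + 1)) (fun _ => / e)); [| apply continuous_const].
  apply (continuous_comp (fun x => (x - xi) / e + 1) bump); [| apply continuous_bump].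
  apply continuity_pt_filterlim. unfold Rdiv. reg.
Qed.

Lemma is_derive_rise x : is_derive (rise xi e) x (drise xi e x).
Proof.
  unfold rise, drise. auto_derive; [eexists; apply is_derive_ramp |].
  rewrite (is_derive_unique _ _ _ (is_derive_ramp _)).
  unfold Rdiv, Rminus. rewrite Rmult_1_l. apply Rmult_comm.
Qed.

Lemma rise_bounds x : 0 <= rise xi e x <= 1.
Proof. apply ramp_bounds. Qed.

Lemma drise_nonneg x : 0 <= drise xi e x.
Proof. apply Rdiv_le_0_compat; [apply bump_nonneg | easy]. Qed.

Lemma rise_left x : x <= xi - e -> rise xi e x = 0.
Proof.
  intros Hx. apply ramp_le0.
  apply (Rmult_le_reg_r e); [easy |]. unfold Rdiv. rewrite Rmult_plus_distr_r, Rmult_assoc, Rinv_l; lra.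
Qed.

Lemma rise_right x : xi <= x -> rise xi e x = 1 /\ drise xi e x = 0.
Proof.
  intros Hx. assert (1 <= (x - xi) / e + 1) by (pose proof (Rdiv_le_0_compat (x - xi) e ltac:(lra) He); lra).
  split; [now apply ramp_ge1 |]. unfold drise. rewrite bump_out by lra. apply Rdiv_0_l.
Qed.

Lemma RInt_drise : RInt (drise xi e) (xi - e) xi = 1.
Proof.
  rewrite (RInt_ext _ (Derive (rise xi e))).
  - rewrite RInt_Derive.
    + rewrite (proj1 (rise_right xi (Rle_refl xi))), rise_left by lra.
      unfold minus, plus, opp. simpl. lra.
    + intros x _. eexists. apply is_derive_rise.
    + intros x _. apply (continuous_ext (drise xi e)); [| apply continuous_drise].
      intros y. symmetry. apply is_derive_unique, is_derive_rise.
  - intros x _. symmetry. apply is_derive_unique, is_derive_rise.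
Qed.

End Rise.

Lemma filterlim_RInt_drise (f : R -> R) xi : (forall x, x <= xi -> continuous f x) ->
  filterlim (fun e => RInt (fun x => f x * drise xi e x) (xi - e) xi) (at_right 0) (locally (f xi)).
Proof.
  intros Hf. apply filterlim_locally. intros eps.
  destruct (proj1 (filterlim_locally _ _) (Hf xi (Rle_refl xi)) (pos_div_2 eps)) as [d Hd].
  exists d. intros e Hed He. change (Rabs (e - 0) < d) in Hed. rewrite Rminus_0_r, Rabs_pos_eq in Hed by lra.
  change (Rabs (RInt (fun x => f x * drise xi e x) (xi - e) xi - f xi) < eps).
  assert (Hdr : ex_RInt (drise xi e) (xi - e) xi)
    by (apply ex_RInt_continuous_left; [lra | intros; now apply continuous_drise]).
  assert (Hfd : ex_RInt (fun x => f x * drise xi e x) (xi - e) xi).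
  { apply ex_RInt_continuous_left; [lra |]. intros x Hx.
    now apply continuous_Rmult; [apply Hf | apply continuous_drise]. }
  assert (Hconst : ex_RInt (fun x => f xi * drise xi e x) (xi - e) xi)
    by now apply (ex_RInt_scal (V := R_NormedModule)).
  rewrite <- (Rmult_1_r (f xi)), <- (RInt_drise xi e He), <- RInt_Rmult_l, <- RInt_Rminus by easy.
  apply Rle_lt_trans with (RInt (fun x => eps / 2 * drise xi e x) (xi - e) xi).
  - eapply Rle_trans; [apply abs_RInt_le; [lra | now apply (ex_RInt_minus (V := R_NormedModule))] |].
    apply RInt_le; [lra | | now apply (ex_RInt_scal (V := R_NormedModule)) |].
    + apply (ex_RInt_continuous (V := R_CompleteNormedModule)). intros z Hz.
      rewrite Rmin_left, Rmax_right in Hz by lra.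
      apply (continuous_comp _ Rabs); [| apply continuity_pt_filterlim, Rcontinuity_abs].
      apply (continuous_minus (V := R_NormedModule)); apply continuous_Rmult;
        try apply continuous_drise; try apply continuous_const; try easy. apply Hf. lra.
    + intros x Hx.
      rewrite <- Rmult_minus_distr_r, Rabs_mult, (Rabs_pos_eq (drise _ _ _)) by now apply drise_nonneg.
      apply Rmult_le_compat_r; [now apply drise_nonneg |].
      left. apply (Hd x). change (Rabs (x - xi) < d). rewrite Rabs_left1; lra.
  - rewrite RInt_Rmult_l, RInt_drise by easy. pose proof (cond_pos eps). lra.
Qed.

Lemma filterlim_RInt_rise (g : R -> R) xi : (forall x, x <= xi -> continuous g x) ->
  filterlim (fun e => RInt (fun x => g x * rise xi e x) (xi - e) xi) (at_right 0) (locally 0).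
Proof.
  intros Hg. apply filterlim_locally. intros eps.
  destruct (proj1 (filterlim_locally _ _) (Hg xi (Rle_refl xi)) (mkposreal 1 Rlt_0_1)) as [d Hd].
  set (M := Rabs (g xi) + 1).
  assert (HM : 0 < M) by (pose proof (Rabs_pos (g xi)); unfold M; lra).
  assert (Hd' : 0 < Rmin d (eps / M))
    by (apply Rmin_pos; [apply cond_pos | apply Rdiv_lt_0_compat; [apply cond_pos | easy]]).
  exists (mkposreal _ Hd'). intros e Hed He. change (Rabs (e - 0) < Rmin d (eps / M)) in Hed.
  rewrite Rminus_0_r, Rabs_pos_eq in Hed by lra.
  pose proof (Rmin_l d (eps / M)). pose proof (Rmin_r d (eps / M)).
  change (Rabs (RInt (fun x => g x * rise xi e x) (xi - e) xi - 0) < eps). rewrite Rminus_0_r.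
  eapply Rle_lt_trans; [apply abs_RInt_le_const with (M := M); [lra | |] |].
  - apply ex_RInt_continuous_left; [lra |]. intros x Hx.
    apply continuous_Rmult; [now apply Hg | now apply continuous_rise].
  - intros x Hx. rewrite Rabs_mult, (Rabs_pos_eq (rise _ _ _)) by apply rise_bounds.
    assert (Hgx : Rabs (g x) <= M).
    { specialize (Hd x ltac:(change (Rabs (x - xi) < d); rewrite Rabs_left1; lra)).
      change (Rabs (g x - g xi) < 1) in Hd. pose proof (Rabs_triang_inv (g x) (g xi)). unfold M. lra. }
    pose proof (rise_bounds xi e x). pose proof (Rabs_pos (g x)). nra.
  - apply Rlt_le_trans with (eps / M * M); [apply Rmult_lt_compat_r; lra | right; field; lra].
Qed.

(* Equal to [exp (gamma x)] on [[xi, 1]], where the flux terms of the weak equation then cancel. *)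
Definition test_phi (gamma xi e x : R) : R := exp (gamma * x) * (rise xi e x * ramp (2 - x)).

Definition Dtest_phi (gamma xi e x : R) : R :=
  gamma * test_phi gamma xi e x
  + exp (gamma * x) * (drise xi e x * ramp (2 - x) - rise xi e x * bump (2 - x)).

Section TestFunction.

Variables gamma xi e : R.
Hypothesis He : 0 < e.

Lemma is_derive_test_phi x : is_derive (test_phi gamma xi e) x (Dtest_phi gamma xi e x).
Proof.
  unfold test_phi, Dtest_phi. auto_derive.
  - split; [eexists; now apply is_derive_rise |]. split; [eexists; apply is_derive_ramp | easy].
  - replace (Derive (fun y => rise xi e y) x) with (drise xi e x)
      by (symmetry; apply is_derive_unique, is_derive_rise).
    replace (Derive (fun y => ramp y) (2 + - x)) with (bump (2 - x))
      by (symmetry; apply is_derive_unique, is_derive_ramp).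
    unfold test_phi, Rminus. lra.
Qed.

Lemma continuous_Dtest_phi x : continuous (Dtest_phi gamma xi e) x.
Proof.
  assert (Hr : continuous (fun x => ramp (2 - x)) x)
    by (apply (continuous_comp (fun x => 2 - x) ramp);
        [apply continuity_pt_filterlim; reg | apply continuous_ramp]).
  assert (Hb : continuous (fun x => bump (2 - x)) x)
    by (apply (continuous_comp (fun x => 2 - x) bump);
        [apply continuity_pt_filterlim; reg | apply continuous_bump]).
  assert (Hexp := continuous_exp_scal gamma x).
  assert (Hrise := continuous_rise xi e x). assert (Hdrise := continuous_drise xi e x).
  unfold Dtest_phi, test_phi.
  apply (continuous_plus (V := R_NormedModule)).
  - apply (continuous_Rmult (fun _ => gamma)); [apply continuous_const |].
    apply continuous_Rmult; [easy |]. now apply continuous_Rmult.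
  - apply continuous_Rmult; [easy |].
    apply (continuous_minus (V := R_NormedModule)); now apply continuous_Rmult.
Qed.

Lemma test_fun_test_phi : xi < 0 -> test_fun (test_phi gamma xi e) (xi - e) 2.
Proof.
  intros Hxi. split; [lra | split].
  - intros x [Hx | Hx]; unfold test_phi.
    + rewrite rise_left by easy. ring.
    + rewrite (ramp_le0 (2 - x)) by lra. ring.
  - intros x. split; [eexists; apply is_derive_test_phi |].
    apply (continuous_ext (Dtest_phi gamma xi e)); [| apply continuous_Dtest_phi].
    intros y. symmetry. apply is_derive_unique, is_derive_test_phi.
Qed.

Lemma test_phi_le_1 x : x <= 1 ->
  test_phi gamma xi e x = exp (gamma * x) * rise xi e x /\
  Derive (test_phi gamma xi e) x = exp (gamma * x) * (gamma * rise xi e x + drise xi e x).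
Proof.
  intros Hx. assert (Hr : ramp (2 - x) = 1) by (apply ramp_ge1; lra).
  assert (Hb : bump (2 - x) = 0) by (apply bump_out; lra).
  rewrite (is_derive_unique _ _ _ (is_derive_test_phi x)).
  unfold Dtest_phi, test_phi. rewrite Hr, Hb. split; ring.
Qed.

End TestFunction.

Section FirstIntegral.

Variables m p gamma c : R.
Variables h dh U : R -> R.

Hypothesis Hp : 1 < p.
Hypothesis Hh : C1_nonneg h dh.
Hypothesis Hh0 : h 0 = 0.
Hypothesis HUc : forall x, continuous U x.
Hypothesis HU0 : forall x, 0 <= x -> U x = 0.
Hypothesis HUpos : forall x, x < 0 -> 0 < U x.
Hypothesis HUd : forall x, x < 0 -> ex_derive U x.
Hypothesis HUd2 : forall x, x < 0 -> ex_derive (Derive U) x.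
Hypothesis Hweak : tw_weak_solution m p gamma h c U.

Lemma U_nonneg x : 0 <= U x.
Proof. destruct (Rlt_dec x 0) as [Hx | Hx]; [now left; apply HUpos | rewrite HU0; lra]. Qed.

Lemma is_derive_rpow_U a x : x < 0 ->
  is_derive (fun y => rpow (U y) a) x (a * Rpower (U x) (a - 1) * Derive U x).
Proof.
  intros Hx. apply (is_derive_ext_loc (fun y => Rpower (U y) a)).
  - apply locally_interval with m_infty 0; [easy | easy |].
    intros y _ Hy. now rewrite rpow_Rpower by now apply HUpos.
  - replace (a * Rpower (U x) (a - 1) * Derive U x) with (scal (Derive U x) (a * Rpower (U x) (a - 1)))
      by (unfold scal; simpl; unfold mult; simpl; ring).
    apply (is_derive_comp (fun u => Rpower u a) U x).
    + apply is_derive_Rpower. now apply HUpos.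
    + apply Derive_correct. now apply HUd.
Qed.

Lemma flux_neg x : x < 0 -> flux m p U x = phip p (m * Rpower (U x) (m - 1) * Derive U x).
Proof. intros Hx. unfold flux. f_equal. now apply is_derive_unique, is_derive_rpow_U. Qed.

Lemma flux_pos x : 0 < x -> flux m p U x = 0.
Proof.
  intros Hx. unfold flux. rewrite (Derive_ext_loc _ (fun _ => 0)), Derive_const.
  - rewrite phip_rpow, Ropp_0, rpow_le0 by lra. ring.
  - apply locally_interval with 0 p_infty; [easy | easy |].
    intros y Hy _. simpl in Hy. rewrite HU0 by lra. now apply rpow_le0.
Qed.

Lemma continuous_flux x : x < 0 -> continuous (flux m p U) x.
Proof.
  intros Hx. apply (continuous_ext_loc _ (fun y => phip p (m * Rpower (U y) (m - 1) * Derive U y))).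
  { apply locally_interval with m_infty 0; [easy | easy |]. intros y _ Hy. symmetry. now apply flux_neg. }
  apply (continuous_comp _ (phip p)); [| now apply continuous_phip].
  apply continuous_Rmult; [apply (continuous_Rmult (fun _ => m)); [apply continuous_const |] |].
  - apply (continuous_comp U (fun u => Rpower u (m - 1))); [apply HUc |].
    apply continuous_Rpower. now apply HUpos.
  - apply (ex_derive_continuous (K := R_AbsRing) (V := R_NormedModule)). now apply HUd2.
Qed.

Definition forcing (x : R) : R := (h (U x) - c * gamma * U x) * exp (gamma * x).

Definition forcing_integral (xi : R) : R := RInt forcing xi 0.

Lemma continuous_forcing x : continuous forcing x.
Proof.
  apply continuous_Rmult; [| apply continuous_exp_scal].
  apply (continuous_minus (V := R_NormedModule)).
  - apply continuous_h_comp with dh; [easy | exact U_nonneg | apply HUc].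
  - apply (continuous_Rmult (fun _ => c * gamma)); [apply continuous_const | apply HUc].
Qed.

Definition flux_weight (x : R) : R := (c * U x + flux m p U x) * exp (gamma * x).

Lemma continuous_flux_weight x : x < 0 -> continuous flux_weight x.
Proof.
  intros Hx. apply continuous_Rmult; [| apply continuous_exp_scal].
  apply (continuous_plus (V := R_NormedModule)); [| now apply continuous_flux].
  apply (continuous_Rmult (fun _ => c)); [apply continuous_const | apply HUc].
Qed.

Lemma weak_identity xi e : 0 < e -> xi < 0 ->
  RInt (fun x => flux_weight x * drise xi e x - forcing x * rise xi e x) (xi - e) xi = forcing_integral xi.
Proof.
  intros He Hxi. set (phi := test_phi gamma xi e).
  destruct (Hweak phi (xi - e) 2 (test_fun_test_phi gamma xi e He Hxi)) as [I1 [I2 [I3 [I4 Hw]]]].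
  set (G := fun x => (c * (U x * Derive phi x) + flux m p U x * Derive phi x)
                     - (gamma * (flux m p U x * phi x) + h (U x) * phi x)).
  assert (I1' : ex_RInt (fun x => c * (U x * Derive phi x)) (xi - e) 2)
    by now apply (ex_RInt_scal (V := R_NormedModule)).
  assert (I3' : ex_RInt (fun x => gamma * (flux m p U x * phi x)) (xi - e) 2)
    by now apply (ex_RInt_scal (V := R_NormedModule)).
  assert (I12 : ex_RInt (fun x => c * (U x * Derive phi x) + flux m p U x * Derive phi x) (xi - e) 2)
    by now apply (ex_RInt_plus (V := R_NormedModule)).
  assert (I34 : ex_RInt (fun x => gamma * (flux m p U x * phi x) + h (U x) * phi x) (xi - e) 2)
    by now apply (ex_RInt_plus (V := R_NormedModule)).
  assert (IG : ex_RInt G (xi - e) 2) by now apply (ex_RInt_minus (V := R_NormedModule)).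
  assert (G0 : RInt G (xi - e) 2 = 0).
  { unfold G. rewrite RInt_Rminus, !RInt_Rplus, !RInt_Rmult_l by easy. lra. }
  rewrite (RInt_Chasles3 G (xi - e) xi 0 2) in G0 by (easy || lra).
  assert (Gright : RInt G 0 2 = 0).
  { rewrite (RInt_ext_le _ (fun _ => 0)); [rewrite RInt_const; apply Rmult_0_r | lra |].
    intros x Hx. unfold G. rewrite flux_pos, HU0, Hh0 by lra. ring. }
  assert (Gmid : RInt G xi 0 = - forcing_integral xi).
  { unfold forcing_integral. replace (- RInt forcing xi 0) with (-1 * RInt forcing xi 0) by ring.
    rewrite <- RInt_Rmult_l.
    - apply RInt_ext_le; [lra |]. intros x Hx. unfold G, phi.
      destruct (test_phi_le_1 gamma xi e x ltac:(lra)) as [-> ->].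
      destruct (rise_right xi e He x ltac:(lra)) as [-> ->]. unfold forcing. ring.
    - apply (ex_RInt_continuous (V := R_CompleteNormedModule)). intros; apply continuous_forcing. }
  assert (Gleft : RInt G (xi - e) xi
                  = RInt (fun x => flux_weight x * drise xi e x - forcing x * rise xi e x) (xi - e) xi).
  { apply RInt_ext_le; [lra |]. intros x Hx. unfold G, phi.
    destruct (test_phi_le_1 gamma xi e x ltac:(lra)) as [-> ->].
    unfold flux_weight, forcing. ring. }
  lra.
Qed.

Lemma first_integral xi : xi < 0 -> flux_weight xi = forcing_integral xi.
Proof.
  intros Hxi.
  apply (filterlim_locally_unique (F := at_right 0)
           (fun e => RInt (fun x => flux_weight x * drise xi e x - forcing x * rise xi e x) (xi - e) xi)).
  - rewrite <- (Rminus_0_r (flux_weight xi)).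
    apply (filterlim_ext_loc (fun e => RInt (fun x => flux_weight x * drise xi e x) (xi - e) xi
                                         - RInt (fun x => forcing x * rise xi e x) (xi - e) xi)).
    + exists (mkposreal 1 Rlt_0_1). intros e _ He. symmetry.
      apply RInt_Rminus; apply ex_RInt_continuous_left; try lra; intros x Hx; apply continuous_Rmult.
      * apply continuous_flux_weight. lra.
      * now apply continuous_drise.
      * apply continuous_forcing.
      * apply continuous_rise.
    + apply filterlim_Rminus.
      * apply filterlim_RInt_drise. intros x Hx. apply continuous_flux_weight. lra.
      * apply filterlim_RInt_rise. intros x _. apply continuous_forcing.
  - apply (filterlim_ext_loc (fun _ => forcing_integral xi)); [| apply filterlim_const].
    exists (mkposreal 1 Rlt_0_1). intros e _ He. symmetry. now apply weak_identity.
Qed.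

End FirstIntegral.

Section NearTheFront.

Variables m p gamma c : R.
Variables h dh U : R -> R.

Hypothesis Hm : 0 < m.
Hypothesis Hp : 1 < p.
Hypothesis Hmp : 1 < m * (p - 1).
Hypothesis Hc : 0 < c.
Hypothesis Hgamma : 0 <= gamma.
Hypothesis Hh : C1_nonneg h dh.
Hypothesis Hh0 : h 0 = 0.
Hypothesis HUc : forall x, continuous U x.
Hypothesis HUmon : forall x y, x <= y -> U y <= U x.
Hypothesis HU0 : forall x, 0 <= x -> U x = 0.
Hypothesis HUpos : forall x, x < 0 -> 0 < U x.
Hypothesis HUd : forall x, x < 0 -> ex_derive U x.
Hypothesis Hfirst : forall x, x < 0 -> flux_weight m p gamma c U x = forcing_integral gamma c h U x.

Let alpha := / (p - 1).
Let V := fun y => m / (m - alpha) * rpow (U y) (m - alpha).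

Lemma alpha_gt_0 : 0 < alpha.
Proof. apply Rinv_0_lt_compat. lra. Qed.

Lemma m_minus_alpha_gt_0 : 0 < m - alpha.
Proof.
  apply Rlt_0_minus. apply (Rmult_lt_reg_r (p - 1)); [lra |].
  unfold alpha. rewrite Rinv_l; lra.
Qed.

Let HUnonneg := U_nonneg U HU0 HUpos.

Lemma U_0 : U 0 = 0.
Proof. apply HU0. lra. Qed.

Lemma filterlim_U_at_left_0 : filterlim U (at_left 0) (locally 0).
Proof. pose proof (filterlim_at_left_0_continuous U (HUc 0)) as HU. now rewrite U_0 in HU. Qed.

Lemma forcing_integral_0 : forcing_integral gamma c h U 0 = 0.
Proof. exact (RInt_point 0 (forcing gamma c h U)). Qed.

Lemma is_derive_forcing_integral x : is_derive (forcing_integral gamma c h U) x (- forcing gamma c h U x).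
Proof.
  apply (is_derive_RInt' (forcing gamma c h U) (forcing_integral gamma c h U) x 0).
  - apply filter_forall. intros y. apply (RInt_correct (V := R_CompleteNormedModule)).
    apply (ex_RInt_continuous (V := R_CompleteNormedModule)). intros; now apply continuous_forcing with dh.
  - now apply continuous_forcing with dh.
Qed.

Lemma forcing_integral_bound : exists d K, 0 < d /\
  forall xi, - d < xi < 0 -> Rabs (forcing_integral gamma c h U xi) <= - xi * (K * U xi).
Proof.
  destruct (C1_nonneg_lipschitz h dh Hh 0 (Rle_refl 0)) as [dl [K0 [Hdl [HK0 Hlip]]]].
  destruct (proj1 (filterlim_locally _ _) (HUc 0) (mkposreal dl Hdl)) as [d0 Hd0].
  exists d0, (K0 + c * gamma). split; [apply cond_pos |]. intros xi Hxi.
  assert (HUxi : U xi < dl).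
  { specialize (Hd0 xi ltac:(change (Rabs (xi - 0) < d0); rewrite Rminus_0_r, Rabs_left; lra)).
    change (Rabs (U xi - U 0) < dl) in Hd0. rewrite U_0, Rminus_0_r in Hd0. apply Rabs_def2 in Hd0. lra. }
  replace (- xi) with (0 - xi) by ring. apply abs_RInt_le_const; [lra | |].
  - apply (ex_RInt_continuous (V := R_CompleteNormedModule)). intros; now apply continuous_forcing with dh.
  - intros x Hx. pose proof (HUmon xi x ltac:(lra)). pose proof (HUnonneg x).
    assert (Hexp : exp (gamma * x) <= 1).
    { rewrite <- exp_0. destruct (Req_dec (gamma * x) 0) as [-> | Hne]; [lra |].
      left. apply exp_increasing. nra. }
    specialize (Hlip (U x) (HUnonneg x) ltac:(rewrite Rminus_0_r, Rabs_pos_eq; lra)).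
    rewrite Hh0, !Rminus_0_r, (Rabs_pos_eq (U x)) in Hlip by easy.
    unfold forcing. rewrite Rabs_mult, (Rabs_pos_eq (exp _)) by (left; apply exp_pos).
    apply Rle_trans with (Rabs (h (U x) - c * gamma * U x));
      [pose proof (Rabs_pos (h (U x) - c * gamma * U x)); nra |].
    eapply Rle_trans; [apply Rabs_triang |]. rewrite Rabs_Ropp, Rabs_mult, (Rabs_pos_eq (c * gamma)) by nra.
    rewrite (Rabs_pos_eq (U x)) by easy.
    assert (Hcg : 0 <= c * gamma) by nra.
    pose proof (Rmult_le_compat_l (c * gamma) _ _ Hcg H). pose proof (Rmult_le_compat_l K0 _ _ HK0 H).
    lra.
Qed.

(* [flux_ratio] is [P = |V'|^(p-1)]: the flux is [-U P] and [V' = -P^alpha]. *)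
Definition flux_ratio (xi : R) : R :=
  c - forcing_integral gamma c h U xi * exp (- gamma * xi) / U xi.

Lemma flux_eq_flux_ratio xi : xi < 0 -> flux m p U xi = - U xi * flux_ratio xi.
Proof.
  intros Hxi. pose proof (HUpos xi Hxi). unfold flux_ratio.
  rewrite <- (Hfirst xi Hxi). unfold flux_weight. rewrite Rmult_assoc, <- exp_plus.
  replace (gamma * xi + - gamma * xi) with 0 by ring. rewrite exp_0. field. lra.
Qed.

Lemma filterlim_forcing_integral_div_U :
  filterlim (fun xi => forcing_integral gamma c h U xi / U xi) (at_left 0) (locally 0).
Proof.
  destruct forcing_integral_bound as [d [K [Hd HJ]]].
  apply filterlim_locally. intros eps. apply at_left_0_interval.
  assert (HK : 0 < Rabs K + 1) by (pose proof (Rabs_pos K); lra).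
  exists (Rmin d (eps / (Rabs K + 1))).
  split; [apply Rmin_pos; [easy | apply Rdiv_lt_0_compat; [apply cond_pos | easy]] |].
  intros xi Hxi. pose proof (Rmin_l d (eps / (Rabs K + 1))). pose proof (Rmin_r d (eps / (Rabs K + 1))).
  pose proof (HUpos xi ltac:(lra)) as HU. specialize (HJ xi ltac:(lra)).
  change (Rabs (forcing_integral gamma c h U xi / U xi - 0) < eps). rewrite Rminus_0_r.
  unfold Rdiv. rewrite Rabs_mult, Rabs_inv, (Rabs_pos_eq (U xi)) by lra.
  apply (Rmult_lt_reg_r (U xi)); [easy |]. rewrite Rmult_assoc, Rinv_l, Rmult_1_r by lra.
  eapply Rle_lt_trans; [exact HJ |].
  assert (- xi * (Rabs K + 1) < eps) by
    (apply Rlt_le_trans with (eps / (Rabs K + 1) * (Rabs K + 1));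
     [apply Rmult_lt_compat_r; lra | right; field; lra]).
  apply Rle_lt_trans with (- xi * (Rabs K + 1) * U xi); [| apply Rmult_lt_compat_r; lra].
  pose proof (Rle_abs K). assert (0 <= - xi * U xi) by nra. nra.
Qed.

Lemma filterlim_flux_ratio : filterlim flux_ratio (at_left 0) (locally c).
Proof.
  assert (Hlim : filterlim (fun xi => c - forcing_integral gamma c h U xi / U xi * exp (- gamma * xi))
                   (at_left 0)
                   (locally (c - 0 * exp (- gamma * 0)))).
  { apply filterlim_Rminus; [apply filterlim_const |].
    apply filterlim_Rmult; [apply filterlim_forcing_integral_div_U |].
    apply filterlim_at_left_0_continuous, continuous_exp_scal. }
  rewrite Rmult_0_l, Rminus_0_r in Hlim. revert Hlim. apply filterlim_ext.
  intros xi. unfold flux_ratio, Rdiv. ring.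
Qed.

Lemma flux_ratio_pos_near_0 : exists d, 0 < d /\ forall xi, - d < xi < 0 -> 0 < flux_ratio xi.
Proof.
  apply at_left_0_interval.
  apply (filter_imp (fun xi => ball c (mkposreal c Hc) (flux_ratio xi))).
  - intros xi Hxi. change (Rabs (flux_ratio xi - c) < c) in Hxi. apply Rabs_def2 in Hxi. lra.
  - apply filterlim_flux_ratio, locally_ball.
Qed.

Section PositiveRatio.

Variable xi : R.
Hypothesis Hxi : xi < 0.
Hypothesis HP : 0 < flux_ratio xi.

Lemma Derive_U_flux_ratio :
  m * Rpower (U xi) (m - alpha - 1) * Derive U xi = - Rpower (flux_ratio xi) alpha.
Proof.
  pose proof (HUpos xi Hxi) as Hu. pose proof alpha_gt_0 as Ha.
  set (s := m * Rpower (U xi) (m - 1) * Derive U xi).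
  assert (Hflux : phip p s = - U xi * flux_ratio xi)
    by (rewrite <- flux_eq_flux_ratio; [symmetry; apply flux_neg |]; easy).
  assert (Hs : s < 0).
  { destruct (Rlt_dec s 0) as [| Hs]; [easy |].
    pose proof (phip_nonneg p s ltac:(lra)). nra. }
  rewrite <- (Ropp_involutive s), phip_opp_Rpower in Hflux by lra.
  assert (Hs' : - s = Rpower (U xi * flux_ratio xi) alpha).
  { rewrite <- (Rpower_Rinv (- s) (p - 1)) by lra. f_equal. lra. }
  replace (m - alpha - 1) with (- alpha + (m - 1)) by ring.
  rewrite Rpower_plus, Rpower_Ropp.
  replace (m * (/ Rpower (U xi) alpha * Rpower (U xi) (m - 1)) * Derive U xi)
    with (/ Rpower (U xi) alpha * s) by (unfold s; ring).
  rewrite <- Rpower_mult_distr in Hs' by lra.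
  replace s with (- (Rpower (U xi) alpha * Rpower (flux_ratio xi) alpha)) by lra.
  field. apply Rgt_not_eq, Rpower_gt_0.
Qed.

Lemma Derive_V :
  Derive V xi = - Rpower (flux_ratio xi) alpha.
Proof.
  pose proof m_minus_alpha_gt_0.
  apply is_derive_unique. rewrite <- Derive_U_flux_ratio.
  replace (m * Rpower (U xi) (m - alpha - 1) * Derive U xi)
    with (m / (m - alpha) * ((m - alpha) * Rpower (U xi) (m - alpha - 1) * Derive U xi)) by (field; lra).
  apply (is_derive_scal (fun y => rpow (U y) (m - alpha))).
  apply is_derive_rpow_U; easy.
Qed.

End PositiveRatio.

Lemma is_derive_flux_ratio xi : xi < 0 -> 0 < flux_ratio xi ->
  is_derive flux_ratio xi
    (h (U xi) / U xi - c * gamma + gamma * (c - flux_ratio xi)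
     - Rpower (flux_ratio xi) alpha * exp (- gamma * xi)
       * (forcing_integral gamma c h U xi / (m * Rpower (U xi) (m - alpha + 1)))).
Proof.
  intros Hxi HP. pose proof (HUpos xi Hxi) as Hu.
  pose proof (Derive_U_flux_ratio xi Hxi HP) as Hrel.
  assert (Hpow : Rpower (U xi) (m - alpha + 1) = Rpower (U xi) (m - alpha - 1) * (U xi * U xi)).
  { replace (m - alpha + 1) with (m - alpha - 1 + (1 + 1)) by ring. now rewrite !Rpower_plus, Rpower_1. }
  pose proof (Rpower_gt_0 (U xi) (m - alpha - 1)).
  assert (HdU : Derive U xi = - Rpower (flux_ratio xi) alpha / (m * Rpower (U xi) (m - alpha - 1)))
    by (rewrite <- Hrel; field; lra).
  unfold flux_ratio at 1. auto_derive.
  - repeat split; [eexists; apply is_derive_forcing_integral | now apply HUd | lra].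
  - replace (Derive (fun x => forcing_integral gamma c h U x) xi) with (- forcing gamma c h U xi)
      by (symmetry; apply is_derive_unique, is_derive_forcing_integral).
    change (Derive (fun x => U x) xi) with (Derive U xi).
    rewrite HdU, Hpow. unfold forcing, flux_ratio.
    replace (exp (- gamma * xi)) with (/ exp (gamma * xi)) by (rewrite <- exp_Ropp; f_equal; ring).
    field. repeat split; try lra; apply Rgt_not_eq; apply exp_pos.
Qed.

Lemma filterlim_forcing_integral_quotient :
  filterlim (fun xi => forcing_integral gamma c h U xi / (m * Rpower (U xi) (m - alpha + 1))) (at_left 0)
    (locally ((dh 0 - c * gamma) / ((m - alpha + 1) * Rpower c alpha))).
Proof.
  pose proof m_minus_alpha_gt_0 as Hma. set (b := m - alpha + 1).
  assert (Hb : 0 < b) by (unfold b; lra).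
  destruct flux_ratio_pos_near_0 as [d [Hd HP]].
  (* Cauchy's mean value theorem for [forcing_integral] against [U^b] on [[xi, 0]]. *)
  apply filterlim_at_left_0_intermediate
    with (fun eta => (h (U eta) / U eta - c * gamma) * exp (gamma * eta)
                     * / (b * Rpower (flux_ratio eta) alpha)).
  - exists d. split; [easy |]. intros xi Hxi.
    destruct (cauchy_MVT (forcing_integral gamma c h U) (fun x => rpow (U x) b)
                (fun x => - forcing gamma c h U x)
                (fun x => b * Rpower (U x) (b - 1) * Derive U x) xi 0) as [eta [Heta E]].
    + lra.
    + intros x _. apply is_derive_forcing_integral.
    + intros x Hx. apply (is_derive_rpow_U U); [easy | easy | lra].
    + intros x _. apply (ex_derive_continuous (K := R_AbsRing) (V := R_NormedModule)).
      eexists. apply is_derive_forcing_integral.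
    + intros x _. apply (continuous_comp U (fun u => rpow u b)); [apply HUc |].
      now apply continuous_rpow.
    + exists eta. split; [lra |].
      pose proof (HUpos xi ltac:(lra)) as Hux. pose proof (HUpos eta ltac:(lra)) as Hue.
      pose proof (Derive_U_flux_ratio eta ltac:(lra) (HP eta ltac:(lra))) as Hrel.
      pose proof (Rpower_gt_0 (flux_ratio eta) alpha). pose proof (Rpower_gt_0 (U xi) b).
      rewrite U_0, forcing_integral_0, rpow_le0, rpow_Rpower in E by lra.
      replace (b - 1) with (m - alpha - 1 + 1) in E by (unfold b; ring).
      rewrite Rpower_plus, Rpower_1 in E by easy.
      replace (b * (Rpower (U eta) (m - alpha - 1) * U eta) * Derive U eta)
        with (b * U eta / m * (m * Rpower (U eta) (m - alpha - 1) * Derive U eta)) in E by (field; lra).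
      rewrite Hrel in E. unfold forcing in E.
      set (X := (h (U eta) - c * gamma * U eta) * exp (gamma * eta)) in E.
      assert (E1 : Rpower (U xi) b * X * m
                   = forcing_integral gamma c h U xi * (b * U eta * Rpower (flux_ratio eta) alpha)).
      { transitivity ((0 - Rpower (U xi) b) * - X * m); [ring |]. rewrite E. field. lra. }
      assert (HJ : forcing_integral gamma c h U xi
                   = Rpower (U xi) b * X * m / (b * U eta * Rpower (flux_ratio eta) alpha))
        by (rewrite E1; field; repeat split; lra).
      rewrite HJ. unfold X. field. repeat split; lra.
  - replace ((dh 0 - c * gamma) / (b * Rpower c alpha))
      with ((dh 0 - c * gamma) * exp (gamma * 0) * / (b * Rpower c alpha))
      by (rewrite Rmult_0_r, exp_0; unfold Rdiv; ring).
    pose proof (Rpower_gt_0 c alpha).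
    apply filterlim_Rmult; [apply filterlim_Rmult |].
    + apply filterlim_Rminus; [| apply filterlim_const].
      apply (filterlim_h_quotient_at_left_0 h dh Hh U Hh0); [apply filterlim_U_at_left_0 | easy].
    + apply filterlim_at_left_0_continuous, continuous_exp_scal.
    + apply filterlim_Rinv; [apply Rgt_not_eq; apply Rmult_lt_0_compat; lra |].
      apply filterlim_Rmult; [apply filterlim_const |].
      apply filterlim_Rpower; [easy | apply filterlim_flux_ratio].
Qed.

Lemma filterlim_Derive_flux_ratio :
  filterlim (Derive flux_ratio) (at_left 0)
    (locally ((dh 0 - c * gamma) * (m - alpha) / (m - alpha + 1))).
Proof.
  pose proof m_minus_alpha_gt_0. pose proof (Rpower_gt_0 c alpha).
  destruct flux_ratio_pos_near_0 as [d [Hd HP]].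
  set (l := (dh 0 - c * gamma) / ((m - alpha + 1) * Rpower c alpha)).
  replace ((dh 0 - c * gamma) * (m - alpha) / (m - alpha + 1))
    with (dh 0 - c * gamma + gamma * (c - c) - Rpower c alpha * exp (- gamma * 0) * l)
    by (unfold l; rewrite Rmult_0_r, exp_0; field; lra).
  apply (filterlim_ext_loc (fun xi =>
    h (U xi) / U xi - c * gamma + gamma * (c - flux_ratio xi)
    - Rpower (flux_ratio xi) alpha * exp (- gamma * xi)
      * (forcing_integral gamma c h U xi / (m * Rpower (U xi) (m - alpha + 1))))).
  - apply at_left_0_interval. exists d. split; [easy |]. intros xi Hxi.
    symmetry. apply is_derive_unique, is_derive_flux_ratio; [lra | now apply HP].
  - apply filterlim_Rminus; [apply filterlim_Rplus; [apply filterlim_Rminus |] |].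
    + apply (filterlim_h_quotient_at_left_0 h dh Hh U Hh0); [apply filterlim_U_at_left_0 | easy].
    + apply filterlim_const.
    + apply filterlim_Rmult; [apply filterlim_const |].
      apply filterlim_Rminus; [apply filterlim_const | apply filterlim_flux_ratio].
    + apply filterlim_Rmult; [apply filterlim_Rmult |].
      * apply filterlim_Rpower; [easy | apply filterlim_flux_ratio].
      * apply filterlim_at_left_0_continuous, continuous_exp_scal.
      * apply filterlim_forcing_integral_quotient.
Qed.

Lemma Derive_V_near_0 : exists d, 0 < d /\ forall xi, - d < xi < 0 ->
  0 < flux_ratio xi /\
  locally xi (fun y => Derive V y = - Rpower (flux_ratio y) alpha).
Proof.
  destruct flux_ratio_pos_near_0 as [d [Hd HP]]. exists d. split; [easy |]. intros xi Hxi.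
  split; [now apply HP |].
  apply locally_interval with (- d) 0; [simpl; lra | simpl; lra |].
  intros y Hy1 Hy2. simpl in Hy1, Hy2. apply Derive_V; [easy | apply HP; lra].
Qed.

Lemma filterlim_Derive_V :
  filterlim (fun xi => Derive V xi) (at_left 0) (locally (- Rpower c alpha)).
Proof.
  destruct Derive_V_near_0 as [d [Hd HV]].
  apply (filterlim_ext_loc (fun xi => - Rpower (flux_ratio xi) alpha)).
  - apply at_left_0_interval. exists d. split; [easy |]. intros xi Hxi.
    symmetry. exact (locally_singleton _ _ (proj2 (HV xi Hxi))).
  - apply filterlim_Ropp, filterlim_Rpower; [easy | apply filterlim_flux_ratio].
Qed.

Lemma filterlim_Derive_Derive_V :
  filterlim (fun xi => Derive (Derive V) xi) (at_left 0)
    (locally ((gamma * c - dh 0) * (m - alpha) / ((p - 1) * (m - alpha + 1) * Rpower c (1 - alpha)))).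
Proof.
  pose proof m_minus_alpha_gt_0. pose proof (Rpower_gt_0 c alpha). pose proof (Rpower_gt_0 c (1 - alpha)).
  destruct Derive_V_near_0 as [d [Hd HV]].
  apply (filterlim_ext_loc (fun xi => - (alpha * Rpower (flux_ratio xi) (alpha - 1) * Derive flux_ratio xi))).
  - apply at_left_0_interval. exists d. split; [easy |]. intros xi Hxi. destruct (HV xi Hxi) as [HP HVxi].
    symmetry. apply is_derive_unique.
    apply (is_derive_ext_loc (fun y => - Rpower (flux_ratio y) alpha));
      [now apply (filter_imp _ _ (fun y Hy => eq_sym Hy)) |].
    apply (is_derive_opp (K := R_AbsRing) (V := R_NormedModule) (fun y => Rpower (flux_ratio y) alpha)).
    replace (alpha * Rpower (flux_ratio xi) (alpha - 1) * Derive flux_ratio xi)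
      with (scal (Derive flux_ratio xi) (alpha * Rpower (flux_ratio xi) (alpha - 1)))
      by (unfold scal; simpl; unfold mult; simpl; ring).
    apply (is_derive_comp (fun u => Rpower u alpha) flux_ratio); [now apply is_derive_Rpower |].
    apply Derive_correct. eexists. apply is_derive_flux_ratio; [lra | easy].
  - replace ((gamma * c - dh 0) * (m - alpha) / ((p - 1) * (m - alpha + 1) * Rpower c (1 - alpha)))
      with (- (alpha * Rpower c (alpha - 1) * ((dh 0 - c * gamma) * (m - alpha) / (m - alpha + 1)))).
    + apply filterlim_Ropp, filterlim_Rmult; [apply filterlim_Rmult |].
      * apply filterlim_const.
      * apply filterlim_Rpower; [easy | apply filterlim_flux_ratio].
      * apply filterlim_Derive_flux_ratio.
    + replace (alpha - 1) with (- (1 - alpha)) by ring. rewrite Rpower_Ropp.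
      unfold alpha in *. field. repeat split; lra.
Qed.

Lemma filterlim_Derive_phip_Derive_V :
  filterlim (fun xi => Derive (fun y => phip p (Derive V y)) xi) (at_left 0)
    (locally ((gamma * c - dh 0) * (m - alpha) / (m - alpha + 1))).
Proof.
  destruct Derive_V_near_0 as [d [Hd HV]].
  apply (filterlim_ext_loc (fun xi => - Derive flux_ratio xi)).
  - apply at_left_0_interval. exists d. split; [easy |]. intros xi Hxi. destruct (HV xi Hxi) as [HP HVxi].
    symmetry. apply is_derive_unique.
    apply (is_derive_ext_loc (fun y => - flux_ratio y)).
    + apply locally_interval with (- d) 0; [simpl; lra | simpl; lra |].
      intros y Hy1 Hy2. simpl in Hy1, Hy2. destruct (HV y ltac:(lra)) as [HPy HVy].
      rewrite (locally_singleton _ _ HVy), phip_opp_Rpower, Rpower_mult by apply Rpower_gt_0.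
      unfold alpha. rewrite Rinv_l, Rpower_1; [easy | easy | lra].
    + apply (is_derive_opp (K := R_AbsRing) (V := R_NormedModule) flux_ratio).
      apply Derive_correct. eexists. apply is_derive_flux_ratio; [lra | easy].
  - replace ((gamma * c - dh 0) * (m - alpha) / (m - alpha + 1))
      with (- ((dh 0 - c * gamma) * (m - alpha) / (m - alpha + 1)))
      by (field; pose proof m_minus_alpha_gt_0; lra).
    apply filterlim_Ropp, filterlim_Derive_flux_ratio.
Qed.

End NearTheFront.

Theorem mainTheorem11
  (m p : R) (h dh : R -> R) (gstar gamma c : R) (U : R -> R)
  (Hm : 0 < m) (Hp : 1 < p) (Hmp : 1 < m * (p - 1))
  (Hh : reaction_hyp m h dh)
  (Hgstar : 0 < gstar) (Hwf : wavefront_hyp m p h gstar)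
  (Hgamma : 0 <= gamma < gstar)
  (Hc : 0 < c) (HU : finite_wavefront_at m p gamma h c U 0) :
  let alpha := / (p - 1) in
  let V := fun xi => m / (m - alpha) * rpow (U xi) (m - alpha) in
  filterlim (fun xi => Derive V xi) (at_left 0) (locally (- Rpower c alpha)) /\
  filterlim (fun xi => Derive (Derive V) xi) (at_left 0)
    (locally ((gamma * c - dh 0) * (m - alpha)
              / ((p - 1) * (m - alpha + 1) * Rpower c (1 - alpha)))) /\
  filterlim (fun xi => Derive (fun y => phip p (Derive V y)) xi) (at_left 0)
    (locally ((gamma * c - dh 0) * (m - alpha) / (m - alpha + 1))).
Proof.
  intros alpha V.
  destruct (Hwf gamma Hgamma) as [_ [_ Hsmooth]].
  assert (HUd : forall x, x < 0 -> ex_derive U x) by exact (fun x => Hsmooth c U 0 HU 1%nat x).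
  assert (HUd2 : forall x, x < 0 -> ex_derive (Derive U) x) by exact (fun x => Hsmooth c U 0 HU 2%nat x).
  destruct HU as [HUc [HUmon [_ [HU0 [HUpos Hweak]]]]].
  destruct Hh as [HC1 [Hh0 _]].
  assert (Hfirst : forall x, x < 0 -> flux_weight m p gamma c U x = forcing_integral gamma c h U x)
    by exact (first_integral m p gamma c h dh U Hp HC1 Hh0 HUc HU0 HUpos HUd HUd2 Hweak).
  split; [| split].
  - now apply (filterlim_Derive_V m p gamma c h dh U).
  - now apply (filterlim_Derive_Derive_V m p gamma c h dh U).
  - now apply (filterlim_Derive_phip_Derive_V m p gamma c h dh U).
Qed.
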